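(* Let $\dot{\mathbf{x}}=\mathbf{F}(\mathbf{x})$ have a stable limit cycle $\mathcal{A}$ with angular frequency $\Omega>0$ and basin $\mathcal{B}(\mathcal{A})$, whose Floquet characteristic multipliers $\mu_1,\dots,\mu_{n-1}$ are distinct with $|\mu_{n-1}|\le\cdots\le|\mu_1|<1$, and characteristic exponents $\nu_j$ ($\mu_j=e^{2\pi\nu_j/\Omega}$, $\mathrm{Re}[\nu_j]<0$). Let $L_\mathcal{B}$ be the generator of the Koopman semigroup $\{U^t_\mathcal{B}\}_{t\ge0}$ restricted to $\mathcal{B}(\mathcal{A})$, acting on the averaging kernel Hilbert space $\mathcal{S}_{\mathbf{z},\theta}$. Then for every $s\in\mathbb{C}$ with $\mathrm{Re}[s]>0$ and every $f\in\mathcal{S}_{\mathbf{z},\theta}$, $$R(s;L_\mathcal{B})f=\sum_{\substack{k_1,\dots,k_{n-1}\in\mathbb{N}_0\\ m\in\mathbb{Z}}}\frac{P_{k_1\cdots k_{n-1},m}f}{s-\{(k_1\nu_1+\cdots+k_{n-1}\nu_{n-1})+\mathrm{i}m\Omega\}},$$ the series converging in $\mathcal{S}_{\mathbf{z},\theta}$; the region of convergence of $R(s;L_\mathcal{B})$ is $\{s\in\mathbb{C}:\mathrm{Re}[s]>0\}$.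
   Context: Koopman operators $U^tf=f\circ\mathbf{S}^t$, generator $Lf=\lim_{t\downarrow0}(U^tf-f)/t$, Koopman resolvent $R(s;L)=(sI-L)^{-1}$, given for strongly continuous semigroups by $\int_0^\infty e^{-st}U^tf\,\mathrm{d}t$. In $\mathcal{B}(\mathcal{A})$ the dynamics are conjugate to $\dot{\mathbf{y}}=\mathbf{A}(\theta)\mathbf{y}$, $\dot\theta=\Omega$, with $\mathbf{y}\in\mathbb{R}^{n-1}$, $\theta\in\mathbb{T}$, $\mathbf{A}$ $2\pi$-periodic; with Floquet matrix $\mathbf{P}(\theta)$, Floquet stability matrix $\mathbf{B}$ (eigenvalues $\mu_j$) diagonalized by $\mathbf{V}$, set $\mathbf{z}(\mathbf{y},\theta)=\mathbf{V}^{-1}\mathbf{P}(\theta)^{-1}\mathbf{y}$. Then $\phi_{k_1\cdots k_{n-1},m}=z_1^{k_1}\cdots z_{n-1}^{k_{n-1}}e^{\mathrm{i}m\theta}$ is a Koopman eigenfunction with eigenvalue $k_1\nu_1+\cdots+k_{n-1}\nu_{n-1}+\mathrm{i}m\Omega$. The space $\mathcal{S}_{\mathbf{z},\theta}$ consists of functions analytic (entire) in $\mathbf{z}\in\mathbb{C}^{n-1}$ and $\mathscr{L}^2$ in $\theta\in\mathbb{T}$, expanded as $f=\sum_{k,m}\phi_{k_1\cdots k_{n-1},m}V_{k_1\cdots k_{n-1},m}$ with $\|f\|^2=\sum_{k,m}|V_{k_1\cdots k_{n-1},m}|^2k_1!\cdots k_{n-1}!$; projections $P_{k_1\cdots k_{n-1},m}f=\phi_{k_1\cdots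 k_{n-1},m}V_{k_1\cdots k_{n-1},m}$ (orthogonal). The semigroup acts as $U^t_\mathcal{B}f=\sum_{k,m}\phi_{k,m}V_{k,m}e^{(k_1\nu_1+\cdots+k_{n-1}\nu_{n-1}+\mathrm{i}m\Omega)t}$ and is strongly continuous. *)

From Stdlib Require Import Reals List ZArith.
From Coquelicot Require Import Coquelicot.
Open Scope R_scope.

Definition cexp (z : C) : C := (exp (Re z) * cos (Im z), exp (Re z) * sin (Im z)).

(** Index (k_1,...,k_{n-1}; m): a list of naturals k (meant to have length n-1)
    and an integer m. *)
Definition idx : Type := (list nat * Z)%type.
Definition idx_eq_dec (i j : idx) : {i = j} + {i <> j}.
Proof. decide equality; [apply Z.eq_dec | apply (list_eq_dec Nat.eq_dec)]. Defined.

Definition valid_idx (n : nat) (i : idx) : Prop := length (fst i) = (n - 1)%nat.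

Fixpoint kweight (k : list nat) : nat :=
  match k with nil => 1%nat | a :: k' => (fact a * kweight k')%nat end.

(** k_1 nu_1 + ... + k_{n-1} nu_{n-1}; nu_{j+1} is [nu j] (0-based). *)
Fixpoint ksum (nu : nat -> C) (k : list nat) (j : nat) : C :=
  match k with
  | nil => RtoC 0
  | a :: k' => Cplus (Cmult (RtoC (INR a)) (nu j)) (ksum nu k' (S j))
  end.

Definition eigval (nu : nat -> C) (Om : R) (i : idx) : C :=
  Cplus (ksum nu (fst i) 0) (0, IZR (snd i) * Om).

Definition mu (Om : R) (nu : nat -> C) (j : nat) : C :=
  cexp (Cmult (nu j) (RtoC (2 * PI / Om))).

(** Elements of S_{z,theta} are represented by their expansion coefficients
    V_{k,m} w.r.t. the eigenfunctions phi_{k,m}:  f = sum phi_{k,m} V_{k,m}. *)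
Definition coef : Type := idx -> C.

Fixpoint lsum (F : list idx) (a : idx -> R) : R :=
  match F with nil => 0 | i :: F' => a i + lsum F' a end.

Definition wsq (V : coef) (i : idx) : R := INR (kweight (fst i)) * (Cmod (V i))^2.

(** ||V||^2 <= eps  (norm^2 = sum |V_{k,m}|^2 k_1!...k_{n-1}!) *)
Definition small (V : coef) (eps : R) : Prop :=
  forall F : list idx, NoDup F -> lsum F (wsq V) <= eps.

Definition in_S (n : nat) (V : coef) : Prop :=
  (forall i, ~ valid_idx n i -> V i = RtoC 0) /\ exists B, small V B.

Definition csub (V W : coef) : coef := fun i => Cminus (V i) (W i).

(** Projection P_{k,m} f = phi_{k,m} V_{k,m} *)
Definition proj (i : idx) (f : coef) : coef :=
  fun j => if idx_eq_dec j i then f i else RtoC 0.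

Fixpoint fsum (F : list idx) (x : idx -> coef) : coef :=
  match F with
  | nil => fun _ => RtoC 0
  | i :: F' => fun j => Cplus (x i j) (fsum F' x j)
  end.

(** Unconditional convergence in S of the series sum_i x_i to g
    (net of finite index sets). *)
Definition series_conv (x : idx -> coef) (g : coef) : Prop :=
  forall eps, 0 < eps -> exists F0 : list idx,
    forall F, NoDup F -> incl F0 F -> small (csub g (fsum F x)) eps.

Definition Ut (nu : nat -> C) (Om : R) (t : R) (f : coef) : coef :=
  fun i => Cmult (f i) (cexp (Cmult (eigval nu Om i) (RtoC t))).

(** Generator: L f = lim_{t -> 0+} (U^t f - f)/t in the norm of S;
    [gen n nu Om f Lf] means f in dom(L) and L f = Lf. *)
Definition gen (n : nat) (nu : nat -> C) (Om : R) (f Lf : coef) : Prop :=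
  in_S n f /\ in_S n Lf /\
  forall eps, 0 < eps -> exists delta, 0 < delta /\
    forall t, 0 < t < delta ->
      small (fun i => Cminus (Cmult (Cminus (Ut nu Om t f i) (f i)) (RtoC (/ t))) (Lf i)) eps.

Definition resolvent_value (n : nat) (nu : nat -> C) (Om : R) (s : C) (f g : coef) : Prop :=
  (exists Lg, gen n nu Om g Lg /\ forall i, Cminus (Cmult s (g i)) (Lg i) = f i) /\
  (forall h Lh, gen n nu Om h Lh ->
     (forall i, Cminus (Cmult s (h i)) (Lh i) = f i) -> h = g).

(** Truncated Laplace integral int_0^T e^{-st} U^t f dt, computed coordinatewise
    (each coordinate functional is continuous, so this is the S-valued integral). *)
Definition laplaceT (nu : nat -> C) (Om : R) (s : C) (f : coef) (T : R) : coef :=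
  fun i =>
    let h := fun t => Cmult (cexp (Copp (Cmult s (RtoC t)))) (Ut nu Om t f i) in
    (RInt (fun t => Re (h t)) 0 T, RInt (fun t => Im (h t)) 0 T).

Definition laplace_converges (n : nat) (nu : nat -> C) (Om : R) (s : C) (f : coef) : Prop :=
  exists g, in_S n g /\
    forall eps, 0 < eps -> exists T0, forall T, T0 <= T ->
      small (csub (laplaceT nu Om s f T) g) eps.

From Stdlib Require Import Reals List ZArith Lra Lia Classical FunctionalExtensionality.
From Coquelicot Require Import Coquelicot.
Open Scope R_scope.

(** In the coefficient representation of [S_{z,theta}] the Koopman semigroup is
    diagonal: [U^t] multiplies the coordinate of the eigenfunction [phi_i] by
    [e^{lam_i t}], where [lam_i = eigval nu Om i].  Everything follows from this
    diagonal structure and from [Re lam_i <= 0] on the admissible indices, which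
    is a consequence of [Re nu_j < 0]. *)

Lemma lsum_app (F G : list idx) (a : idx -> R) : lsum (F ++ G) a = lsum F a + lsum G a.
Proof. induction F as [|x F IH]; simpl; [ring | rewrite IH; ring]. Qed.

Lemma lsum_le (F : list idx) (a b : idx -> R) :
  (forall x, In x F -> a x <= b x) -> lsum F a <= lsum F b.
Proof.
  induction F as [|x F IH]; simpl; intros H; [lra|].
  assert (a x <= b x) by (apply H; left; reflexivity).
  assert (lsum F a <= lsum F b) by (apply IH; intros y Hy; apply H; right; exact Hy).
  lra.
Qed.

Lemma lsum_scal (F : list idx) (a : idx -> R) (c : R) :
  lsum F (fun x => c * a x) = c * lsum F a.
Proof. induction F as [|x F IH]; simpl; [ring | rewrite IH; ring]. Qed.

Lemma lsum_filter (G : list idx) (P : idx -> bool) (a : idx -> R) :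
  lsum G a = lsum (filter P G) a + lsum (filter (fun x => negb (P x)) G) a.
Proof. induction G as [|x G IH]; simpl; [ring|]. destruct (P x); simpl; rewrite IH; ring. Qed.

Lemma lsum_const_le (G : list idx) (a : idx -> R) (c : R) :
  (forall x, In x G -> a x <= c) -> lsum G a <= c * INR (length G).
Proof.
  induction G as [|x G IH]; cbn [lsum length]; intros H; [simpl; lra|]. rewrite S_INR.
  assert (a x <= c) by (apply H; left; reflexivity).
  assert (lsum G a <= c * INR (length G)) by (apply IH; intros y Hy; apply H; right; exact Hy).
  lra.
Qed.

Definition memb (F : list idx) (x : idx) : bool :=
  if in_dec idx_eq_dec x F then true else false.

Lemma memb_spec (F : list idx) (x : idx) : memb F x = true <-> In x F.
Proof. unfold memb; destruct (in_dec idx_eq_dec x F); split; auto; discriminate. Qed.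

Lemma lsum_split_bound (G F0 : list idx) (a b : idx -> R) (c eps : R) :
  NoDup G -> 0 <= c ->
  (forall x, In x F0 -> a x <= c) ->
  (forall x, ~ In x F0 -> a x <= b x) ->
  (forall G', NoDup G' -> (forall x, In x G' -> ~ In x F0) -> lsum G' b <= eps) ->
  lsum G a <= c * INR (length F0) + eps.
Proof.
  intros ND Hc Hin Hout Htail. rewrite (lsum_filter G (memb F0)). apply Rplus_le_compat.
  - eapply Rle_trans.
    + apply lsum_const_le. intros x Hx. apply filter_In in Hx. apply Hin, memb_spec, Hx.
    + apply Rmult_le_compat_l; [exact Hc|]. apply le_INR, NoDup_incl_length.
      * apply NoDup_filter, ND.
      * intros x Hx. apply filter_In in Hx. apply memb_spec, Hx.
  - set (G' := filter _ G).
    assert (Hout' : forall x, In x G' -> ~ In x F0).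
    { intros x Hx Hx0. apply filter_In in Hx. destruct Hx as [_ Hx].
      apply memb_spec in Hx0. rewrite Hx0 in Hx. discriminate. }
    eapply Rle_trans; [apply lsum_le; intros x Hx; apply Hout, Hout', Hx|].
    apply Htail; [apply NoDup_filter, ND | exact Hout'].
Qed.

(** A family whose finite sums are bounded has arbitrarily small sums outside
    a suitable finite set: take a finite sum within [eps] of the supremum. *)
Lemma small_tail (a : idx -> R) (B : R) :
  (forall F, NoDup F -> lsum F a <= B) ->
  forall eps, 0 < eps -> exists F0, NoDup F0 /\
    forall G, NoDup G -> (forall x, In x G -> ~ In x F0) -> lsum G a <= eps.
Proof.
  intros HB eps Heps.
  set (E := fun r => exists F, NoDup F /\ r = lsum F a).
  assert (Hbound : bound E) by (exists B; intros r [F [ND ->]]; auto).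
  assert (Hne : exists r, E r) by (exists 0, nil; split; [constructor | reflexivity]).
  destruct (completeness E Hbound Hne) as [S [HSub HSlub]].
  destruct (classic (exists F0, NoDup F0 /\ S - eps < lsum F0 a)) as [[F0 [ND H]] | Hno].
  - exists F0. split; [exact ND|]. intros G NDG Hdisj.
    assert (HGF : E (lsum (G ++ F0) a)) by (exists (G ++ F0); split; auto; apply NoDup_app; auto).
    apply HSub in HGF. rewrite lsum_app in HGF. lra.
  - exfalso. assert (S <= S - eps); [|lra].
    apply HSlub. intros r [F [ND ->]].
    destruct (Rle_lt_dec (lsum F a) (S - eps)) as [Hle|Hlt]; [exact Hle|].
    exfalso; apply Hno; eauto.
Qed.

Lemma wsq_nonneg (V : coef) (i : idx) : 0 <= wsq V i.
Proof. unfold wsq. apply Rmult_le_pos; [apply pos_INR | apply pow2_ge_0]. Qed.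

Lemma small_nonneg (V : coef) (B : R) : small V B -> 0 <= B.
Proof. intros H. specialize (H nil (NoDup_nil _)). simpl in H. lra. Qed.

Lemma small_mono (V : coef) (B B' : R) : B <= B' -> small V B -> small V B'.
Proof. intros HBB' H F ND. specialize (H F ND). lra. Qed.

Lemma wsq_dominated (V W : coef) (K : R) (i : idx) :
  0 <= K -> Cmod (V i) <= K * Cmod (W i) -> wsq V i <= K ^ 2 * wsq W i.
Proof.
  intros HK H. unfold wsq. pose proof (pos_INR (kweight (fst i))). pose proof (Cmod_ge_0 (V i)).
  assert (Cmod (V i) ^ 2 <= (K * Cmod (W i)) ^ 2) by (apply pow_incr; lra).
  replace (K ^ 2 * (INR (kweight (fst i)) * Cmod (W i) ^ 2))
    with (INR (kweight (fst i)) * (K * Cmod (W i)) ^ 2) by ring.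
  apply Rmult_le_compat_l; assumption.
Qed.

Lemma small_dominated (V W : coef) (K B : R) : 0 <= K ->
  (forall i, Cmod (V i) <= K * Cmod (W i)) -> small W B -> small V (K ^ 2 * B).
Proof.
  intros HK Hdom HW F ND.
  apply Rle_trans with (lsum F (fun i => K ^ 2 * wsq W i)).
  - apply lsum_le. intros i _. apply wsq_dominated; auto.
  - rewrite lsum_scal. apply Rmult_le_compat_l; [apply pow2_ge_0 | auto].
Qed.

Lemma kweight_pos (k : list nat) : (1 <= kweight k)%nat.
Proof. induction k as [|a k IH]; simpl; [lia|]. pose proof (lt_O_fact a). nia. Qed.

(** Every coordinate is bounded by the norm, since all weights [k!] are >= 1. *)
Lemma small_coord (V : coef) (e : R) (i : idx) : 0 <= e -> small V (e ^ 2) -> Cmod (V i) <= e.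
Proof.
  intros He H. specialize (H (i :: nil) (NoDup_cons _ (@in_nil _ i) (NoDup_nil _))).
  simpl in H. unfold wsq in H. pose proof (le_INR _ _ (kweight_pos (fst i))) as Hw.
  pose proof (Cmod_ge_0 (V i)). simpl in Hw. nra.
Qed.

Lemma exp_le_mono (x y : R) : x <= y -> exp x <= exp y.
Proof. intros [H|H]; [left; apply exp_increasing, H | right; rewrite H; reflexivity]. Qed.

Lemma cexp_add (u v : C) : cexp (u + v)%C = (cexp u * cexp v)%C.
Proof.
  unfold cexp, Cplus, Cmult, Re, Im; simpl. rewrite exp_plus, cos_plus, sin_plus.
  apply injective_projections; simpl; ring.
Qed.

Lemma Cmod_cexp (z : C) : Cmod (cexp z) = exp (Re z).
Proof.
  destruct z as [a b]. unfold Cmod, cexp, Re, Im; simpl fst; simpl snd.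
  replace ((exp a * cos b) ^ 2 + (exp a * sin b) ^ 2)
    with ((exp a) ^ 2 * ((sin b)² + (cos b)²)) by (unfold Rsqr; ring).
  rewrite sin2_cos2, Rmult_1_r. apply sqrt_pow2. left; apply exp_pos.
Qed.

Lemma sin_sq_le (x : R) : (sin x)² <= x².
Proof.
  assert (Hpos : forall y, 0 < y -> (sin y)² <= y²).
  { intros y Hy. pose proof (sin_lt_x y Hy).
    assert (- y <= sin y).
    { destruct (Rle_lt_dec 1 y). { pose proof (SIN_bound y). lra. }
      assert (0 <= sin y) by (apply sin_ge_0; pose proof PI2_1; lra). lra. }
    unfold Rsqr; nra. }
  destruct (Rtotal_order x 0) as [Hx|[Hx|Hx]].
  - pose proof (Hpos (- x) ltac:(lra)) as H. rewrite sin_neg, <- !Rsqr_neg in H. exact H.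
  - subst. rewrite sin_0. lra.
  - auto.
Qed.

Lemma one_minus_cos_le (x : R) : 1 - cos x <= x² / 2.
Proof.
  replace x with (2 * (x / 2)) at 1 by field. rewrite cos_2a_sin.
  pose proof (sin_sq_le (x / 2)). unfold Rsqr in *. nra.
Qed.

Lemma cexp_sub_one_le (z : C) : Re z <= 0 -> Cmod (cexp z - 1)%C <= Cmod z.
Proof.
  intros Hz. destruct z as [a b]. unfold Re in Hz; simpl in Hz.
  unfold Cmod, cexp, Cminus, Cplus, Copp, RtoC; simpl. apply sqrt_le_1_alt.
  pose proof (exp_ineq1_le a). pose proof (exp_pos a).
  assert (exp a <= 1) by (rewrite <- exp_0; apply exp_le_mono, Hz).
  pose proof (one_minus_cos_le b). pose proof (sin2_cos2 b). unfold Rsqr in *. nra.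
Qed.

Definition dq (l : C) (t : R) : C := ((cexp (l * t) - 1) * RtoC (/ t))%C.

Lemma dq_bound (l : C) (t : R) : 0 < t -> Re l <= 0 -> Cmod (dq l t) <= Cmod l.
Proof.
  intros Ht Hl. unfold dq. rewrite Cmod_mult, Cmod_R, Rabs_pos_eq by (left; apply Rinv_0_lt_compat, Ht).
  assert (H : Cmod (cexp (l * t) - 1)%C <= Cmod l * t).
  { replace (Cmod l * t) with (Cmod (l * t)%C) by (rewrite Cmod_mult, Cmod_R, Rabs_pos_eq; lra).
    apply cexp_sub_one_le. rewrite re_scal_r. nra. }
  apply (Rmult_le_compat_r (/ t)) in H; [| left; apply Rinv_0_lt_compat, Ht].
  replace (Cmod l * t * / t) with (Cmod l) in H by (field; lra). exact H.
Qed.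

Lemma Cmod_le_sum_abs (x : C) : Cmod x <= Rabs (fst x) + Rabs (snd x).
Proof.
  destruct x as [u v]; unfold Cmod; simpl.
  pose proof (Rabs_pos u); pose proof (Rabs_pos v).
  rewrite <- (sqrt_Rsqr (Rabs u + Rabs v)) by lra.
  apply sqrt_le_1_alt. unfold Rsqr. unfold Rabs in *; destruct (Rcase_abs u), (Rcase_abs v); nra.
Qed.

Lemma deriv_quotient_lim (f : R -> R) (l eps : R) : is_derive f 0 l -> 0 < eps ->
  exists delta, 0 < delta /\ forall t, 0 < t < delta -> Rabs ((f t - f 0) / t - l) < eps.
Proof.
  intros H He. apply is_derive_Reals in H. destruct (H eps He) as [d Hd].
  exists d. split; [apply cond_pos|]. intros t Ht. specialize (Hd t ltac:(lra)).
  rewrite Rplus_0_l in Hd. apply Hd. rewrite Rabs_pos_eq; lra.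
Qed.

(** [dq l t -> l] as [t] decreases to [0]: the real and imaginary parts of
    [t |-> e^{l t}] have derivatives [Re l] and [Im l] at [0]. *)
Lemma dq_lim (l : C) (eps : R) : 0 < eps ->
  exists delta, 0 < delta /\ forall t, 0 < t < delta -> Cmod (dq l t - l)%C < eps.
Proof.
  intros He. destruct l as [a b].
  assert (Hre : is_derive (fun t => exp (a * t) * cos (b * t)) 0 a).
  { auto_derive; auto. rewrite !Rmult_0_r, exp_0, cos_0, sin_0. ring. }
  assert (Him : is_derive (fun t => exp (a * t) * sin (b * t)) 0 b).
  { auto_derive; auto. rewrite !Rmult_0_r, exp_0, cos_0, sin_0. ring. }
  destruct (deriv_quotient_lim _ _ (eps / 2) Hre ltac:(lra)) as [d1 [Hd1 D1]].
  destruct (deriv_quotient_lim _ _ (eps / 2) Him ltac:(lra)) as [d2 [Hd2 D2]].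
  exists (Rmin d1 d2). split; [apply Rmin_glb_lt; auto|]. intros t Ht.
  pose proof (Rmin_l d1 d2). pose proof (Rmin_r d1 d2).
  specialize (D1 t ltac:(lra)). specialize (D2 t ltac:(lra)).
  rewrite !Rmult_0_r, exp_0, cos_0 in D1. rewrite !Rmult_0_r, exp_0, sin_0 in D2.
  eapply Rle_lt_trans; [apply Cmod_le_sum_abs|].
  unfold dq, cexp, Cminus, Cplus, Copp, Cmult, RtoC, Re, Im; simpl.
  replace (a * t - b * 0) with (a * t) by ring. replace (a * 0 + b * t) with (b * t) by ring.
  replace ((exp (a * t) * cos (b * t) + - (1)) * / t - (exp (a * t) * sin (b * t) + - 0) * 0 + - a)
    with ((exp (a * t) * cos (b * t) - 1 * 1) / t - a) by (unfold Rdiv; ring).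
  replace ((exp (a * t) * cos (b * t) + - (1)) * 0 + (exp (a * t) * sin (b * t) + - 0) * / t + - b)
    with ((exp (a * t) * sin (b * t) - 1 * 0) / t - b) by (unfold Rdiv; ring).
  lra.
Qed.

Lemma Re_ksum_nonpos (nu : nat -> C) (k : list nat) (j : nat) :
  (forall p, (j <= p < j + length k)%nat -> Re (nu p) <= 0) -> Re (ksum nu k j) <= 0.
Proof.
  revert j; induction k as [|a k IH]; intros j H; simpl; [unfold Re; simpl; lra|].
  assert (Re (nu j) <= 0) by (apply H; simpl; lia).
  assert (Re (ksum nu k (S j)) <= 0) by (apply IH; intros p Hp; apply H; simpl; lia).
  unfold Re, Cplus, Cmult, RtoC in *; simpl. pose proof (pos_INR a). nra.
Qed.

Lemma Re_eigval_nonpos (n : nat) (Om : R) (nu : nat -> C) (i : idx) :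
  (forall j, (j < n - 1)%nat -> Re (nu j) < 0) -> valid_idx n i -> Re (eigval nu Om i) <= 0.
Proof.
  intros Hnu Hv. unfold valid_idx in Hv.
  assert (Re (ksum nu (fst i) 0) <= 0).
  { apply Re_ksum_nonpos. intros p Hp. rewrite Hv in Hp. left; apply Hnu; lia. }
  unfold eigval, Re, Cplus in *; simpl. lra.
Qed.

Lemma Re_le_dist (s l : C) : Re l <= 0 -> Re s <= Cmod (s - l)%C.
Proof.
  intros Hl. eapply Rle_trans; [|apply re_le_Cmod]. eapply Rle_trans; [|apply Rle_abs].
  unfold Re, Cminus, Cplus, Copp in *; simpl. lra.
Qed.

Definition scale (c : idx -> C) (f : coef) : coef := fun i => (c i * f i)%C.

Lemma scale_scale (c1 c2 : idx -> C) (f : coef) :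
  scale c1 (scale c2 f) = scale (fun i => c1 i * c2 i)%C f.
Proof. apply functional_extensionality; intros i; unfold scale; ring. Qed.

Lemma in_S_invalid (n : nat) (f : coef) (i : idx) : in_S n f -> ~ valid_idx n i -> f i = 0.
Proof. intros [Hsupp _] Hv. exact (Hsupp i Hv). Qed.

Lemma in_S_scale (n : nat) (c : idx -> C) (f : coef) (K : R) : 0 <= K ->
  (forall i, valid_idx n i -> Cmod (c i) <= K) -> in_S n f -> in_S n (scale c f).
Proof.
  intros HK Hc Hf. pose proof Hf as [_ [B HB]]. split.
  - intros i Hi. unfold scale. rewrite (in_S_invalid n f i Hf Hi). ring.
  - exists (K ^ 2 * B). apply (small_dominated _ f); [exact HK| |exact HB].
    intros i. unfold scale. rewrite Cmod_mult.
    destruct (classic (valid_idx n i)) as [Hv|Hv].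
    + apply Rmult_le_compat_r; [apply Cmod_ge_0 | auto].
    + rewrite (in_S_invalid n f i Hf Hv), Cmod_0. lra.
Qed.

Lemma finite_delta (F0 : list idx) (P : idx -> R -> Prop) :
  (forall i, In i F0 -> exists d, 0 < d /\ forall t, 0 < t < d -> P i t) ->
  exists d, 0 < d /\ forall i t, In i F0 -> 0 < t < d -> P i t.
Proof.
  induction F0 as [|a F IH]; intros H.
  - exists 1. split; [lra|]. intros i t [].
  - destruct (H a (or_introl eq_refl)) as [d1 [Hd1 P1]].
    destruct (IH (fun i h => H i (or_intror h))) as [d2 [Hd2 P2]].
    exists (Rmin d1 d2). split; [apply Rmin_glb_lt; auto|].
    pose proof (Rmin_l d1 d2). pose proof (Rmin_r d1 d2).
    intros i t [<-|Hi] Ht; [apply P1 | apply P2; auto]; lra.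
Qed.

Lemma C_eq_of_close (x y : C) : (forall e, 0 < e -> Cmod (x - y)%C <= e) -> x = y.
Proof.
  intros H. destruct (Ceq_dec (x - y)%C 0) as [E|E].
  - replace x with ((x - y) + y)%C by ring. rewrite E. ring.
  - apply Cmod_gt_0 in E. specialize (H (Cmod (x - y)%C / 2) ltac:(lra)). lra.
Qed.

Section Generator.
Variables (n : nat) (Om : R) (nu : nat -> C).
Hypothesis Hnu : forall j, (j < n - 1)%nat -> Re (nu j) < 0.
Local Notation lam := (eigval nu Om).

Lemma diff_quot_eq (h : coef) (t : R) :
  (fun i => Cminus (Cmult (Cminus (Ut nu Om t h i) (h i)) (RtoC (/ t))) (scale lam h i))
  = (fun i => h i * (dq (lam i) t - lam i))%C.
Proof. apply functional_extensionality; intros i. unfold Ut, scale, dq. ring. Qed.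

Lemma dq_coord_lim (h : coef) (i : idx) (e : R) : 0 < e ->
  exists d, 0 < d /\ forall t, 0 < t < d -> wsq (fun j => h j * (dq (lam j) t - lam j))%C i <= e.
Proof.
  intros He. set (A := INR (kweight (fst i)) * Cmod (h i) ^ 2).
  assert (HA : 0 <= A) by (apply Rmult_le_pos; [apply pos_INR | apply pow2_ge_0]).
  assert (Hr : 0 < e / (A + 1)) by (apply Rdiv_lt_0_compat; lra).
  destruct (dq_lim (lam i) (sqrt (e / (A + 1))) (sqrt_lt_R0 _ Hr)) as [d [Hd Hlim]].
  exists d; split; [exact Hd|]. intros t Ht.
  set (c := Cmod (dq (lam i) t - lam i)%C).
  assert (Hc : c ^ 2 <= e / (A + 1)).
  { rewrite <- (sqrt_sqrt (e / (A + 1))) by lra. specialize (Hlim t Ht).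
    pose proof (Cmod_ge_0 (dq (lam i) t - lam i)%C). fold c in Hlim, H. simpl; nra. }
  unfold wsq. rewrite Cmod_mult. fold c.
  replace (INR (kweight (fst i)) * (Cmod (h i) * c) ^ 2) with (A * c ^ 2) by (unfold A; ring).
  apply Rle_trans with (A * (e / (A + 1))); [apply Rmult_le_compat_l; auto|].
  apply Rmult_le_reg_r with (A + 1); [lra|].
  replace (A * (e / (A + 1)) * (A + 1)) with (A * e) by (field; lra). nra.
Qed.

(** Every [h] with [h, lam h] in [S] is in the domain, with [L h = lam h]: the
    quotient error is small on a finite set of indices and dominated by
    [2 |lam_i h_i|], hence small in norm, on the rest. *)
Lemma gen_mul (h : coef) : in_S n h -> in_S n (scale lam h) -> gen n nu Om h (scale lam h).
Proof.
  intros Hh HL. split; [exact Hh|]. split; [exact HL|]. intros eps Heps.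
  destruct HL as [_ [BL HBL]].
  destruct (small_tail (wsq (scale lam h)) BL HBL (eps / 8)) as [F0 [_ Htail]]; [lra|].
  set (N := INR (length F0)). assert (HN : 0 <= N) by apply pos_INR.
  set (e1 := eps / (2 * (N + 1))). assert (He1 : 0 < e1) by (apply Rdiv_lt_0_compat; lra).
  destruct (finite_delta F0 (fun i t => wsq (fun j => h j * (dq (lam j) t - lam j))%C i <= e1))
    as [d [Hd Hnear]].
  { intros i _. apply dq_coord_lim, He1. }
  exists d. split; [exact Hd|]. intros t Ht G NDG. rewrite diff_quot_eq.
  apply Rle_trans with (e1 * N + eps / 2).
  - apply (lsum_split_bound G F0 _ (fun i => 2 ^ 2 * wsq (scale lam h) i)); auto; [lra| |].
    +       intros i _. apply wsq_dominated; [lra|]. unfold scale. rewrite !Cmod_mult.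
      destruct (classic (valid_idx n i)) as [Hv|Hv].
      * assert (Cmod (dq (lam i) t - lam i)%C <= 2 * Cmod (lam i)).
        { pose proof (dq_bound (lam i) t ltac:(lra) (Re_eigval_nonpos n Om nu i Hnu Hv)).
          unfold Cminus. eapply Rle_trans; [apply Cmod_triangle|]. rewrite Cmod_opp. lra. }
        pose proof (Cmod_ge_0 (h i)). nra.
      * rewrite (in_S_invalid n h i Hh Hv), Cmod_0. lra.
    + intros G' NDG' Hout. rewrite lsum_scal. pose proof (Htail G' NDG' Hout). lra.
  - assert (e1 * N <= eps / 2); [|lra].
    apply Rmult_le_reg_r with (2 * (N + 1)); [lra|].
    replace (e1 * N * (2 * (N + 1))) with (eps * N) by (unfold e1; field; lra). nra.
Qed.

(** Conversely, the generator acts on each coordinate as multiplication by [lam i]: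
    both sides are limits of the same coordinate difference quotient. *)
Lemma gen_coord (h Lh : coef) (i : idx) : gen n nu Om h Lh -> Lh i = (lam i * h i)%C.
Proof.
  intros [_ [_ Hlim]]. symmetry. apply C_eq_of_close. intros e He.
  destruct (Hlim ((e / 2) ^ 2) ltac:(nra)) as [d1 [Hd1 D1]].
  pose proof (Cmod_ge_0 (h i)).
  destruct (dq_lim (lam i) (e / (2 * (Cmod (h i) + 1)))) as [d2 [Hd2 D2]].
  { apply Rdiv_lt_0_compat; lra. }
  set (t := Rmin d1 d2 / 2).
  assert (Ht : 0 < t) by (apply Rdiv_lt_0_compat; [apply Rmin_glb_lt|]; lra).
  pose proof (Rmin_l d1 d2). pose proof (Rmin_r d1 d2).
  specialize (D1 t ltac:(unfold t in *; lra)). specialize (D2 t ltac:(unfold t in *; lra)).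
  apply (small_coord _ _ i) in D1; [|lra]. cbv beta in D1.
  set (D := Cminus (Cmult (Cminus (Ut nu Om t h i) (h i)) (RtoC (/ t))) (Lh i)) in D1.
  assert (Hsplit : (lam i * h i - Lh i)%C = (D - h i * (dq (lam i) t - lam i))%C).
  { unfold D, Ut, dq. ring. }
  assert (Herr : Cmod (h i * (dq (lam i) t - lam i))%C <= e / 2).
  { rewrite Cmod_mult. apply Rle_trans with (Cmod (h i) * (e / (2 * (Cmod (h i) + 1)))).
    - apply Rmult_le_compat_l; [lra | left; exact D2].
    - apply Rmult_le_reg_r with (2 * (Cmod (h i) + 1)); [lra|].
      replace (Cmod (h i) * (e / (2 * (Cmod (h i) + 1))) * (2 * (Cmod (h i) + 1)))
        with (Cmod (h i) * e) by (field; lra). nra. }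
  rewrite Hsplit. unfold Cminus at 1.
  eapply Rle_trans; [apply Cmod_triangle|]. rewrite Cmod_opp. lra.
Qed.
End Generator.

Lemma fsum_proj (f : coef) (c : idx -> C) (F : list idx) (j : idx) : NoDup F ->
  fsum F (fun i => fun j => Cmult (proj i f j) (c i)) j =
  if in_dec idx_eq_dec j F then (f j * c j)%C else 0.
Proof.
  induction F as [|a F IH]; intros ND; simpl; [reflexivity|].
  inversion ND as [|? ? Ha ND']; subst. rewrite IH by exact ND'. unfold proj.
  destruct (idx_eq_dec j a) as [->|Hne].
  - destruct (idx_eq_dec a a); [|congruence].
    destruct (in_dec idx_eq_dec a F); [contradiction | ring].
  - destruct (idx_eq_dec a j); [congruence|]. destruct (in_dec idx_eq_dec j F); ring.
Qed.

Section Resolvent.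
Variables (n : nat) (Om : R) (nu : nat -> C) (s : C).
Hypothesis Hnu : forall j, (j < n - 1)%nat -> Re (nu j) < 0.
Hypothesis Hs : 0 < Re s.
Local Notation lam := (eigval nu Om).

Definition rmul : idx -> C := fun i => (/ (s - lam i))%C.

Lemma dist_s_lam (i : idx) : valid_idx n i -> Re s <= Cmod (s - lam i)%C.
Proof. intros Hv. apply Re_le_dist, (Re_eigval_nonpos n Om nu i Hnu Hv). Qed.

Lemma s_sub_lam_neq0 (i : idx) : valid_idx n i -> (s - lam i)%C <> 0.
Proof. intros Hv E. pose proof (dist_s_lam i Hv). rewrite E, Cmod_0 in H. lra. Qed.

Lemma rmul_bound (i : idx) : valid_idx n i -> Cmod (rmul i) <= / Re s.
Proof.
  intros Hv. unfold rmul. rewrite Cmod_inv by (apply s_sub_lam_neq0, Hv).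
  apply Rinv_le_contravar; [exact Hs | apply dist_s_lam, Hv].
Qed.

(** [lam/(s - lam) = s/(s - lam) - 1] is bounded as well. *)
Lemma lam_rmul_bound (i : idx) : valid_idx n i -> Cmod (lam i * rmul i)%C <= Cmod s / Re s + 1.
Proof.
  intros Hv. pose proof (s_sub_lam_neq0 i Hv).
  replace (lam i * rmul i)%C with (s * rmul i - 1)%C by (unfold rmul; field; exact H).
  unfold Cminus. eapply Rle_trans; [apply Cmod_triangle|].
  rewrite Cmod_opp, Cmod_1, Cmod_mult. apply Rplus_le_compat_r.
  apply Rmult_le_compat_l; [apply Cmod_ge_0 | apply rmul_bound, Hv].
Qed.

Section WithF.
Variable f : coef.
Hypothesis Hf : in_S n f.
Local Notation g := (scale rmul f).

Lemma resolvent_in_dom : in_S n g /\ in_S n (scale lam g).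
Proof.
  assert (Hinv : 0 < / Re s) by (apply Rinv_0_lt_compat, Hs).
  assert (Hratio : 0 <= Cmod s / Re s) by (apply Rmult_le_pos; [apply Cmod_ge_0 | lra]).
  split.
  - apply (in_S_scale n _ _ (/ Re s)); [lra | apply rmul_bound | exact Hf].
  - rewrite scale_scale.
    apply (in_S_scale n _ _ (Cmod s / Re s + 1)); [lra | apply lam_rmul_bound | exact Hf].
Qed.

Lemma resolvent_equation (i : idx) : (s * g i - lam i * g i)%C = f i.
Proof.
  unfold scale, rmul. destruct (classic (valid_idx n i)) as [Hv|Hv].
  - field. apply s_sub_lam_neq0, Hv.
  - rewrite (in_S_invalid n f i Hf Hv). ring.
Qed.

Lemma resolvent_mul : resolvent_value n nu Om s f g.
Proof.
  destruct resolvent_in_dom as [Hg HLg]. split.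
  - exists (scale lam g). split; [apply gen_mul; assumption|]. apply resolvent_equation.
  - intros h Lh Hgen Heq. apply functional_extensionality. intros i.
    specialize (Heq i). rewrite (gen_coord n Om nu h Lh i Hgen) in Heq.
    destruct (classic (valid_idx n i)) as [Hv|Hv].
    + unfold scale, rmul. rewrite <- Heq. field. apply s_sub_lam_neq0, Hv.
    + destruct Hgen as [Hh _].
      rewrite (in_S_invalid n h i Hh Hv), (in_S_invalid n g i Hg Hv). reflexivity.
Qed.

Lemma series_resolvent :
  series_conv (fun i => fun j => Cmult (proj i f j) (Cinv (Cminus s (eigval nu Om i)))) g.
Proof.
  intros eps Heps. destruct resolvent_in_dom as [[_ [B HB]] _].
  destruct (small_tail (wsq g) B HB eps Heps) as [F0 [_ Htail]].
  exists F0. intros F NDF Hincl G NDG.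
  apply Rle_trans with (0 * INR (length F) + eps); [|lra].
  apply (lsum_split_bound G F _ (wsq g)); auto; [lra | | |].
  - intros x Hx. unfold wsq, csub. rewrite (fsum_proj f) by exact NDF.
    destruct (in_dec idx_eq_dec x F); [|contradiction].
    replace (g x - f x * / (s - lam x))%C with (RtoC 0) by (unfold scale, rmul; ring).
    rewrite Cmod_0. simpl; lra.
  - intros x Hx. unfold wsq, csub. rewrite (fsum_proj f) by exact NDF.
    destruct (in_dec idx_eq_dec x F); [contradiction|].
    replace (g x - 0)%C with (g x) by ring. lra.
  - intros G' NDG' Hout. apply Htail; [exact NDG'|]. intros x Hx Hx0. exact (Hout x Hx (Hincl x Hx0)).
Qed.
End WithF.
End Resolvent.

Lemma RInt_cexp (d w : C) (T : R) :
  (RInt (fun t => Re (d * w * cexp (w * t))%C) 0 T,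
   RInt (fun t => Im (d * w * cexp (w * t))%C) 0 T) = (d * (cexp (w * T) - 1))%C.
Proof.
  destruct d as [d1 d2], w as [a b].
  assert (Hwt : forall t : R, ((a, b) * RtoC t)%C = (a * t, b * t)).
  { intros t. apply injective_projections; unfold Cmult, RtoC; simpl; ring. }
  assert (E1 : (fun t : R => Re ((d1, d2) * (a, b) * cexp ((a, b) * t))%C) =
    (fun t => exp (a * t) * ((a * d1 - b * d2) * cos (b * t) - (b * d1 + a * d2) * sin (b * t)))).
  { apply functional_extensionality; intros t. rewrite Hwt. unfold cexp, Cmult, Re, Im; simpl. ring. }
  assert (E2 : (fun t : R => Im ((d1, d2) * (a, b) * cexp ((a, b) * t))%C) =
    (fun t => exp (a * t) * ((a * d1 - b * d2) * sin (b * t) + (b * d1 + a * d2) * cos (b * t)))).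
  { apply functional_extensionality; intros t. rewrite Hwt. unfold cexp, Cmult, Re, Im; simpl. ring. }
  rewrite E1, E2.
  assert (I1 : is_RInt (fun t => exp (a * t) * ((a * d1 - b * d2) * cos (b * t) - (b * d1 + a * d2) * sin (b * t))) 0 T
     (minus (exp (a * T) * (d1 * cos (b * T) - d2 * sin (b * T))) (exp (a * 0) * (d1 * cos (b * 0) - d2 * sin (b * 0))))).
  { apply (is_RInt_derive (fun t => exp (a * t) * (d1 * cos (b * t) - d2 * sin (b * t)))).
    - intros x _. auto_derive; auto. ring.
    - intros x _. apply (ex_derive_continuous (K := R_AbsRing) (V := R_NormedModule)). auto_derive; auto. }
  assert (I2 : is_RInt (fun t => exp (a * t) * ((a * d1 - b * d2) * sin (b * t) + (b * d1 + a * d2) * cos (b * t))) 0 T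
     (minus (exp (a * T) * (d1 * sin (b * T) + d2 * cos (b * T))) (exp (a * 0) * (d1 * sin (b * 0) + d2 * cos (b * 0))))).
  { apply (is_RInt_derive (fun t => exp (a * t) * (d1 * sin (b * t) + d2 * cos (b * t)))).
    - intros x _. auto_derive; auto. ring.
    - intros x _. apply (ex_derive_continuous (K := R_AbsRing) (V := R_NormedModule)). auto_derive; auto. }
  rewrite (is_RInt_unique _ _ _ _ I1), (is_RInt_unique _ _ _ _ I2), Hwt.
  unfold minus, plus, opp; simpl. rewrite !Rmult_0_r, exp_0, cos_0, sin_0.
  unfold cexp, Cmult, Cminus, Cplus, Copp, RtoC, Re, Im; simpl.
  apply injective_projections; simpl; ring.
Qed.

Lemma laplace_coord (nu : nat -> C) (Om : R) (s : C) (f : coef) (T : R) (i : idx) (d : C) :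
  f i = (d * (eigval nu Om i - s))%C ->
  laplaceT nu Om s f T i = (d * (cexp ((eigval nu Om i - s) * T) - 1))%C.
Proof.
  intros Hd. set (w := (eigval nu Om i - s)%C) in *.
  assert (Hh : forall t, Cmult (cexp (Copp (Cmult s (RtoC t)))) (Ut nu Om t f i) = (d * w * cexp (w * t))%C).
  { intros t. unfold Ut. rewrite Hd.
    replace (w * t)%C with (eigval nu Om i * t + - (s * t))%C by (unfold w; ring).
    rewrite cexp_add. ring. }
  unfold laplaceT. rewrite <- (RInt_cexp d w T).
  f_equal; apply RInt_ext; intros t _; rewrite Hh; reflexivity.
Qed.

Lemma exp_neg_le_inv (y : R) : 0 <= y -> exp (- y) <= / (1 + y).
Proof. intros Hy. rewrite exp_Ropp. apply Rinv_le_contravar; [lra | apply exp_ineq1_le]. Qed.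

(** For [Re s > 0] the Laplace integral converges to the resolvent: its
    [T]-truncation differs from [g] by the factor [e^{(lam_i - s) T}], of
    modulus at most [e^{-Re s T}]. *)
Lemma laplace_conv (n : nat) (Om : R) (nu : nat -> C) (s : C) (f : coef) :
  (forall j, (j < n - 1)%nat -> Re (nu j) < 0) -> 0 < Re s -> in_S n f ->
  laplace_converges n nu Om s f.
Proof.
  intros Hnu Hs Hf. set (g := scale (rmul Om nu s) f).
  destruct (resolvent_in_dom n Om nu s Hnu Hs f Hf) as [Hg _].
  exists g. split; [exact Hg|]. intros eps Heps.
  pose proof Hg as [_ [B HB]]. pose proof (small_nonneg _ _ HB) as HB0.
  exists (B / (2 * Re s * eps)). intros T HT.
  assert (HT0 : 0 <= T).
  { eapply Rle_trans; [|exact HT]. apply Rmult_le_pos; [exact HB0|].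
    left; apply Rinv_0_lt_compat. nra. }
  set (K := exp (- (Re s * T))).
  assert (Hdecay : forall i, Cmod (csub (laplaceT nu Om s f T) g i) <= K * Cmod (g i)).
  { intros i. unfold csub.
    rewrite (laplace_coord nu Om s f T i (- g i)%C)
      by (rewrite <- (resolvent_equation n Om nu s Hnu Hs f Hf i); fold g; ring).
    replace (- g i * (cexp ((eigval nu Om i - s) * T) - 1) - g i)%C
      with (- (g i * cexp ((eigval nu Om i - s) * T)))%C by ring.
    rewrite Cmod_opp, Cmod_mult, Cmod_cexp, re_scal_r, Rmult_comm.
    destruct (classic (valid_idx n i)) as [Hv|Hv].
    - apply Rmult_le_compat_r; [apply Cmod_ge_0|]. apply exp_le_mono.
      pose proof (Re_eigval_nonpos n Om nu i Hnu Hv).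
      unfold Re, Cminus, Cplus, Copp in *; simpl in *. nra.
    - rewrite (in_S_invalid n g i Hg Hv), Cmod_0. lra. }
  apply small_mono with (K ^ 2 * B); [|apply (small_dominated _ g); auto; left; apply exp_pos].
  assert (HK : K ^ 2 <= / (1 + 2 * Re s * T)).
  { unfold K. simpl. rewrite Rmult_1_r, <- exp_plus.
    replace (- (Re s * T) + - (Re s * T)) with (- (2 * Re s * T)) by ring.
    apply exp_neg_le_inv. nra. }
  assert (HBT : B <= eps * (1 + 2 * Re s * T)).
  { apply (Rmult_le_compat_l (2 * Re s * eps)) in HT; [|nra].
    replace (2 * Re s * eps * (B / (2 * Re s * eps))) with B in HT by (field; lra). nra. }
  apply Rle_trans with (/ (1 + 2 * Re s * T) * B); [apply Rmult_le_compat_r; auto|].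
  apply Rmult_le_reg_l with (1 + 2 * Re s * T); [nra|].
  rewrite <- Rmult_assoc, Rinv_r by nra. lra.
Qed.

Lemma cexp_ne_one (w : C) : w <> 0 -> 0 <= Re w -> exists h, 0 < h /\ cexp (w * h)%C <> 1.
Proof.
  destruct w as [a b]. intros Hw Ha. unfold Re in Ha; simpl in Ha.
  assert (Hwh : forall h : R, ((a, b) * h)%C = (a * h, b * h)).
  { intros h. apply injective_projections; unfold Cmult, RtoC; simpl; ring. }
  destruct (Req_dec b 0) as [Hb|Hb].
  -
    subst b. assert (a <> 0) by (intros ->; apply Hw; reflexivity).
    exists 1. split; [lra|]. rewrite Hwh. unfold cexp, Re, Im, RtoC; simpl. intros E.
    injection E as E1 _. rewrite Rmult_0_l, cos_0, !Rmult_1_r in E1.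
    assert (exp 0 < exp a) by (apply exp_increasing; lra). rewrite exp_0 in H0. lra.
  - (* [b <> 0]: at [h = pi/|b|] the real part is [- e^{a h} < 0] *)
    assert (Hh : 0 < PI / Rabs b) by (apply Rdiv_lt_0_compat; [apply PI_RGT_0 | apply Rabs_pos_lt, Hb]).
    exists (PI / Rabs b). split; [exact Hh|]. rewrite Hwh. unfold cexp, Re, Im, RtoC; simpl. intros E.
    injection E as E1 _.
    assert (Hcos : cos (b * (PI / Rabs b)) = -1).
    { unfold Rabs. destruct (Rcase_abs b).
      - replace (b * (PI / - b)) with (- PI) by (field; lra). rewrite cos_neg. apply cos_PI.
      - replace (b * (PI / b)) with PI by (field; lra). apply cos_PI. }
    rewrite Hcos in E1. pose proof (exp_pos (a * (PI / Rabs b))). lra.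
Qed.

(** [T |-> d (e^{w T} - 1)] has no limit when [d, w <> 0] and [Re w >= 0]:
    over a step [h] with [e^{w h} <> 1] it moves by at least [|d (e^{w h} - 1)|]. *)
Lemma cexp_path_diverges (d w : C) : d <> 0 -> w <> 0 -> 0 <= Re w ->
  ~ exists x, forall e, 0 < e -> exists T0, forall T, T0 <= T ->
      Cmod (d * (cexp (w * T) - 1) - x)%C <= e.
Proof.
  intros Hd Hw HRw [x Hx].
  destruct (cexp_ne_one w Hw HRw) as [h [Hh Hne]].
  set (delta := Cmod (d * (cexp (w * h) - 1))%C).
  assert (Hdelta : 0 < delta).
  { apply Cmod_gt_0, Cmult_neq_0; [exact Hd|]. intros E. apply Hne.
    replace (cexp (w * h)) with ((cexp (w * h) - 1) + 1)%C by ring. rewrite E. ring. }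
  destruct (Hx (delta / 4) ltac:(lra)) as [T0 HT0].
  set (T1 := Rmax T0 0). pose proof (Rmax_l T0 0). pose proof (Rmax_r T0 0).
  pose proof (HT0 T1 ltac:(unfold T1; lra)) as C1.
  pose proof (HT0 (T1 + h) ltac:(unfold T1 in *; lra)) as C2.
  assert (Hstep : (d * (cexp (w * RtoC (T1 + h)) - 1) - d * (cexp (w * T1) - 1))%C
                  = (cexp (w * T1) * (d * (cexp (w * h) - 1)))%C).
  { replace (w * RtoC (T1 + h))%C with (w * T1 + w * h)%C by (rewrite RtoC_plus; ring).
    rewrite cexp_add. ring. }
  assert (Hmove : Cmod (cexp (w * T1) * (d * (cexp (w * h) - 1)))%C <= delta / 2).
  { rewrite <- Hstep.
    replace (d * (cexp (w * RtoC (T1 + h)) - 1) - d * (cexp (w * T1) - 1))%C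
      with ((d * (cexp (w * RtoC (T1 + h)) - 1) - x) + - (d * (cexp (w * T1) - 1) - x))%C by ring.
    eapply Rle_trans; [apply Cmod_triangle|]. rewrite Cmod_opp. lra. }
  rewrite Cmod_mult, Cmod_cexp, re_scal_r in Hmove. fold delta in Hmove.
  assert (1 <= exp (Re w * T1)).
  { rewrite <- exp_0. apply exp_le_mono, Rmult_le_pos; [exact HRw | unfold T1; lra]. }
  nra.
Qed.

(** The eigenfunction [phi_i0] has coordinate [1] at [i0] and [0] elsewhere. *)
Definition unit_coef (i0 : idx) : coef := fun j => if idx_eq_dec j i0 then 1%C else 0%C.

Lemma unit_coef_in_S (n : nat) (i0 : idx) : valid_idx n i0 -> in_S n (unit_coef i0).
Proof.
  intros Hv. split.
  - intros j Hj. unfold unit_coef. destruct (idx_eq_dec j i0) as [->|]; [contradiction | reflexivity].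
  - exists (wsq (unit_coef i0) i0 * INR 1 + 0). intros G NDG.
    apply (lsum_split_bound G (i0 :: nil) _ (fun _ => 0)); [exact NDG | apply wsq_nonneg | | |].
    + intros x [<-|[]]. lra.
    + intros x Hx. unfold wsq, unit_coef. destruct (idx_eq_dec x i0) as [->|].
      * exfalso; apply Hx; left; reflexivity.
      * rewrite Cmod_0. simpl; lra.
    + intros G' _ _. induction G' as [|y G' IH]; simpl; lra.
Qed.

Lemma eigval_zero_k (nu : nat -> C) (Om : R) (k : nat) (m : Z) :
  eigval nu Om (repeat 0%nat k, m) = (0, IZR m * Om).
Proof.
  assert (Hk : forall j, ksum nu (repeat 0%nat k) j = 0%C).
  { induction k as [|k IH]; intros j; simpl; [reflexivity|]. rewrite IH. ring. }
  unfold eigval; simpl. rewrite Hk. apply injective_projections; simpl; ring.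
Qed.

Lemma laplace_diverges (n : nat) (Om : R) (nu : nat -> C) (s : C) : 0 < Om -> Re s <= 0 ->
  ~ (forall f : coef, in_S n f -> laplace_converges n nu Om s f).
Proof.
  intros HOm Hs Hall.
  assert (Hm : exists m : Z, eigval nu Om (repeat 0%nat (n - 1), m) <> s).
  { destruct (classic (eigval nu Om (repeat 0%nat (n - 1), 0%Z) = s)) as [E0|E0]; [|eauto].
    exists 1%Z. rewrite !eigval_zero_k in *. intros E1. rewrite <- E0 in E1.
    injection E1 as E1. lra. }
  destruct Hm as [m Hm]. set (i0 := (repeat 0%nat (n - 1), m)). fold i0 in Hm.
  set (w := (eigval nu Om i0 - s)%C).
  assert (Hw : w <> 0) by (intros E; apply Hm; replace s with (eigval nu Om i0 - w)%C by (unfold w; ring);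
                           rewrite E; ring).
  assert (HRw : 0 <= Re w).
  { unfold w, i0. rewrite eigval_zero_k. unfold Re, Cminus, Cplus, Copp in *; simpl in *. lra. }
  assert (Hv : valid_idx n i0) by apply repeat_length.
  destruct (Hall (unit_coef i0) (unit_coef_in_S n i0 Hv)) as [g [_ Hg]].
  assert (Hd : (/ w)%C <> 0).
  { intros E. pose proof (Cinv_l w Hw) as H1. rewrite E, Cmult_0_l in H1.
    apply (f_equal Re) in H1. simpl in H1. lra. }
  apply (cexp_path_diverges (/ w) w Hd Hw HRw).
  exists (g i0). intros e He. destruct (Hg (e ^ 2) ltac:(nra)) as [T0 HT0].
  exists T0. intros T HT. specialize (HT0 T HT). apply (small_coord _ _ i0) in HT0; [|lra].
  unfold csub in HT0. rewrite (laplace_coord nu Om s (unit_coef i0) T i0 (/ w)%C) in HT0; [exact HT0|].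
  unfold unit_coef. destruct (idx_eq_dec i0 i0) as [_|]; [|congruence]. fold w. field. exact Hw.
Qed.

Theorem theorem3 (n : nat) (Om : R) (nu : nat -> C) :
  (2 <= n)%nat ->
  0 < Om ->
  (forall j, (j < n - 1)%nat -> Re (nu j) < 0) ->
  (forall j1 j2, (j1 < n - 1)%nat -> (j2 < n - 1)%nat -> j1 <> j2 ->
     mu Om nu j1 <> mu Om nu j2) ->
  (forall j, (S j < n - 1)%nat -> Cmod (mu Om nu (S j)) <= Cmod (mu Om nu j)) ->
  Cmod (mu Om nu 0) < 1 ->
  (forall (s : C) (f : coef), 0 < Re s -> in_S n f ->
     exists g : coef,
       series_conv
         (fun i => fun j => Cmult (proj i f j) (Cinv (Cminus s (eigval nu Om i)))) g
       /\ resolvent_value n nu Om s f g)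
  /\
  (forall s : C, (forall f : coef, in_S n f -> laplace_converges n nu Om s f) <-> 0 < Re s).
Proof.
  intros _ HOm Hnu _ _ _. split.
  - intros s f Hs Hf. exists (scale (rmul Om nu s) f). split.
    + exact (series_resolvent n Om nu s Hnu Hs f Hf).
    + exact (resolvent_mul n Om nu s Hnu Hs f Hf).
  - intros s. split.
    + intros Hall. destruct (Rlt_le_dec 0 (Re s)) as [Hs|Hs]; [exact Hs|].
      exfalso. exact (laplace_diverges n Om nu s HOm Hs Hall).
    + intros Hs f Hf. exact (laplace_conv n Om nu s f Hnu Hs Hf).
Qed.
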